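(* Let $X,Y$ be metrizable spaces with $X$ nonempty. Suppose $X=S\cup D$ where $S,D$ are disjoint dense subsets of $X$, and $Y=P\cup Q$ where $P,Q$ are disjoint dense subsets of $Y$. Let $Z=(S\times P)\cup(D\times Q)\subseteq X\times Y$ with the subspace topology of the product. Then $f\colon Z\to Y$, $f(x,y)=y$, is a continuous open surjection (and hence a quotient map).
   Context: A surjection $f\colon Z\to Y$ is a quotient map if for every $G\subseteq Y$, $G$ is open in $Y$ iff $f^{-1}(G)$ is open in $Z$. *)

From HB Require Import structures.
From mathcomp Require Import all_boot all_order all_algebra.
From mathcomp Require Import all_classical all_reals all_analysis.
From mathcomp Require Import Rstruct Rstruct_topology.
Set Implicit Arguments. Unset Strict Implicit. Unset Printing Implicit Defensive.
Import Order.TTheory GRing.Theory Num.Theory.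
Local Open Scope classical_set_scope.
Local Open Scope ring_scope.

Definition is_metric (T : Type) (d : T -> T -> Rdefinitions.R) : Prop :=
  [/\ (forall x y, 0 <= d x y),
      (forall x y, d x y = 0 <-> x = y),
      (forall x y, d x y = d y x) &
      (forall x y z, d x z <= d x y + d y z)].

Definition metrizable (T : topologicalType) : Prop :=
  exists d : T -> T -> Rdefinitions.R, is_metric d /\
    forall U : set T, open U <->
      (forall x, U x -> exists2 e : Rdefinitions.R, 0 < e &
         forall y, d x y < e -> U y).

(* Each vertical section of Z over y is S or D, hence dense in X.  A basic
   open box A * B around a point of an open U of Z meets Z in every vertical
   line over B (density of the section, A being nonempty and open), so B lies
   in the image of U: the projection is open.  Density also gives nonempty
   sections, i.e. surjectivity, and a continuous open surjection is a quotient
   map. *)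
From HB Require Import structures.
From mathcomp Require Import all_boot all_order all_algebra.
From mathcomp Require Import all_classical all_reals all_analysis.
Set Implicit Arguments.
Unset Strict Implicit.
Unset Printing Implicit Defensive.

Local Open Scope classical_set_scope.

Lemma dense_set0N (T : topologicalType) (A : set T) :
  [set: T] !=set0 -> dense A -> A !=set0.
Proof. by move=> T0 /(_ _ T0 openT) [x [_ Ax]]; exists x. Qed.

Lemma dense_subset (T : topologicalType) (A B : set T) :
  A `<=` B -> dense A -> dense B.
Proof.
move=> AB dA O O0 oO; have [x [Ox Ax]] := dA O O0 oO.
by exists x; split; last exact: AB.
Qed.

Section DenseYsections.
Variables (X Y : topologicalType) (Z : set (X * Y)).
Hypothesis dense_ysection : forall y, dense (ysection Z y).

Lemma open_snd_dense_ysection (U : set (subspace Z)) :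
  U `<=` Z -> open U -> open ((@snd X Y) @` U).
Proof.
move=> UZ /open_subspaceP [V oV VZ_UZ].
rewrite openE => _ [[a b] Uab <-].
have [Vab _] : (V `&` Z) (a, b) by rewrite VZ_UZ; split; last exact: UZ.
move: oV; rewrite openE => /(_ _ Vab) [[A B] [/= Aa Bb] AB_V].
apply: (@filterS _ _ _ B) => // y By.
have Aa0 : A° !=set0 by exists a.
have [x [Ax Zxy]] := dense_ysection y Aa0 (@open_interior _ A).
have Uxy : U (x, y).
  have : (V `&` Z) (x, y).
    split; last by rewrite -in_setE -mem_ysection in_setE.
    by apply: AB_V; split=> //; exact: interior_subset.
  by rewrite VZ_UZ => -[].
by exists (x, y).
Qed.

Lemma snd_image_dense_ysection : [set: X] !=set0 -> (@snd X Y) @` Z = [set: Y].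
Proof.
move=> X0; apply/seteqP; split=> // y _.
have [x Zxy] := dense_set0N X0 (dense_ysection y).
by exists (x, y) => //; rewrite -in_setE -mem_ysection in_setE.
Qed.

End DenseYsections.

Lemma open_surj_quotient (T U : topologicalType) (Z : set T) (f : T -> U) :
  {within Z, continuous f} ->
  (forall V : set (subspace Z), V `<=` Z -> open V -> open (f @` V)) ->
  f @` Z = [set: U] ->
  forall G : set U, open G <-> open (Z `&` f @^-1` G : set (subspace Z)).
Proof.
move=> fC fO fZ G; split=> [oG | oZG].
  by rewrite open_subspaceTI; move/continuousP: fC; apply.
have -> : G = f @` (Z `&` f @^-1` G).
  apply/seteqP; split=> [y Gy | _ [x [_ Gfx] <-] //].
  have [x Zx fxy] : (f @` Z) y by rewrite fZ.
  by exists x => //; split; rewrite //= fxy.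
by apply: fO => // x [].
Qed.

Lemma dense_ysection_setUX (X Y : topologicalType) (S D : set X) (P Q : set Y) :
  P `|` Q = [set: Y] -> dense S -> dense D ->
  forall y, dense (ysection ((S `*` P) `|` (D `*` Q)) y).
Proof.
move=> PQ dS dD y.
have [Py | Qy] : (P `|` Q) y by rewrite PQ.
- apply: (@dense_subset _ S) => // x Sx.
  by rewrite /ysection /= in_setE; left.
- apply: (@dense_subset _ D) => // x Dx.
  by rewrite /ysection /= in_setE; right.
Qed.

Theorem mainTheorem9 (X Y : topologicalType)
  (S D : set X) (P Q : set Y) :
  metrizable X -> metrizable Y -> [set: X] !=set0 ->
  S `|` D = [set: X] -> S `&` D = set0 -> dense S -> dense D ->
  P `|` Q = [set: Y] -> P `&` Q = set0 -> dense P -> dense Q ->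
  let Z : set (X * Y) := (S `*` P) `|` (D `*` Q) in
  [/\ {within Z, continuous (@snd X Y)},
      (forall U : set (subspace Z), U `<=` Z -> open U ->
         open ((@snd X Y) @` U)),
      (@snd X Y) @` Z = [set: Y] &
      (forall G : set Y, open G <->
         open (Z `&` (@snd X Y) @^-1` G : set (subspace Z)))].
Proof.
move=> _ _ X0 _ _ dS dD PQ _ _ _ Z.
have dZ := dense_ysection_setUX PQ dS dD.
have sndC : {within Z, continuous (@snd X Y)}.
  by apply: continuous_subspaceT => p; exact: cvg_snd.
have sndO := open_snd_dense_ysection dZ.
have sndZ := snd_image_dense_ysection dZ X0.
by split=> //; exact: open_surj_quotient.
Qed.
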